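(* For an integer $p\ge 0$ and a complex number $z$ with $0<|z|<1$, let $$F(z,p)=\sum_{k=1}^\infty \frac{z^{2k}}{(2k-1)(2k)^p(2k+1)}.$$ Then, if $p$ is even, $$F(z,p)=\frac12\left(\Big(z-\frac1z\Big)\operatorname{arctanh}(z)+1-\sum_{j=1}^{p/2}2^{-(2j-1)}\operatorname{Li}_{2j}(z^2)\right),$$ and, if $p$ is odd, $$F(z,p)=\frac12\left(\Big(z+\frac1z\Big)\operatorname{arctanh}(z)-1+\ln(1-z^2)-\sum_{j=1}^{(p-1)/2}2^{-2j}\operatorname{Li}_{2j+1}(z^2)\right).$$ (Empty sums are $0$.)
   Context: $\operatorname{arctanh}(z)=\int_0^z\frac{dt}{1-t^2}=\frac12\ln\frac{1+z}{1-z}=\sum_{k\ge1}\frac{z^{2k-1}}{2k-1}$ for $|z|<1$ (principal branch of $\ln$). The polylogarithm is $\operatorname{Li}_n(z)=\sum_{k=1}^\infty z^k/k^n$ for $|z|<1$. *)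

From Stdlib Require Import Reals.
From Coquelicot Require Import Coquelicot.
Open Scope C_scope.

Definition CSeries (a : nat -> C) : C :=
  (Series (fun n => Re (a n)), Series (fun n => Im (a n))).

(* Principal argument in (-PI, PI] and principal logarithm. *)
Definition Carg (w : C) : R :=
  if Rle_dec 0 (Im w) then acos (Re w / Cmod w) else (- acos (Re w / Cmod w))%R.
Definition Cln (w : C) : C := (ln (Cmod w), Carg w).

Definition Carctanh (z : C) : C :=
  CSeries (fun k => z ^ (2 * k + 1) / RtoC (INR (2 * k + 1))).

Definition Li (n : nat) (w : C) : C :=
  CSeries (fun k => w ^ (k + 1) / RtoC (INR (k + 1) ^ n)).

Definition Fzp (z : C) (p : nat) : C :=
  CSeries (fun k => z ^ (2 * (k + 1)) /
    RtoC (INR (2 * k + 1) * INR (2 * (k + 1)) ^ p * INR (2 * k + 3))).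

Fixpoint Csum1 (m : nat) (f : nat -> C) : C :=
  match m with O => 0 | S m' => Csum1 m' f + f m end.

From Stdlib Require Import Reals Lra Lia.
From Coquelicot Require Import Coquelicot.
Open Scope C_scope.

(** Since (2k)^2 = (2k-1)(2k+1) + 1, the summand of F(z,p) is that of F(z,p+2) plus
    2^-(p+2) z^(2k) / k^(p+2); hence F(z,p) = F(z,p+2) + 2^-(p+2) Li_(p+2)(z^2), and both
    closed forms reduce to p = 0 and p = 1. There, partial fractions in k express F(z,p)
    through sum_k w^k/(2k+1) = arctanh(z)/z with w = z^2 and, for p = 1, through Li_1(w).
    The remaining identity Li_1(w) = -ln(1-w) for the principal logarithm is proved by real
    calculus in t on [0,1]: the real and imaginary parts of Li_1(tw) are power series in t
    whose derivatives are the real and imaginary parts of w/(1-tw), which are also the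
    derivatives of -ln|1-tw| and of atan(t Im w / (1 - t Re w)) = -arg(1-tw). *)

Lemma Rabs_inv_le_1 (d : R) : (1 <= d -> Rabs (/ d) <= 1)%R.
Proof.
  intros Hd; rewrite Rabs_pos_eq by (left; apply Rinv_0_lt_compat; lra).
  rewrite <- Rinv_1; apply Rinv_le_contravar; lra.
Qed.

Lemma Rabs_inv_INR_le_1 (n : nat) : (1 <= n)%nat -> (Rabs (/ INR n) <= 1)%R.
Proof. intros Hn; apply Rabs_inv_le_1, (le_INR 1), Hn. Qed.

Lemma INR_succ_pow_ge_1 (n k : nat) : (1 <= INR (k + 1) ^ n)%R.
Proof. apply pow_R1_Rle; rewrite plus_INR; assert (H := pos_INR k); simpl; lra. Qed.

Lemma Rabs_inv_INR_succ_pow_le_1 (n k : nat) : (Rabs (/ INR (k + 1) ^ n) <= 1)%R.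
Proof. apply Rabs_inv_le_1, INR_succ_pow_ge_1. Qed.

Lemma Rabs_Im_le_Cmod (c : C) : (Rabs (Im c) <= Cmod c)%R.
Proof.
  destruct c as [x y]; unfold Cmod; simpl.
  rewrite <- sqrt_Rsqr_abs; apply sqrt_le_1_alt; unfold Rsqr; nra.
Qed.

Lemma Cmod_sqr_lt_1 (z : C) : (Cmod z < 1)%R -> (Cmod (z ^ 2) < 1)%R.
Proof.
  intros Hz; rewrite Cmod_pow; apply pow_lt_1_compat; [split; [apply Cmod_ge_0 | exact Hz] | lia].
Qed.

Lemma Cdiv_RtoC (c : C) (d : R) : d <> 0%R -> c / RtoC d = c * RtoC (/ d).
Proof. intros Hd; unfold Cdiv; rewrite RtoC_inv by exact Hd; reflexivity. Qed.

Definition ex_CSeries (a : nat -> C) : Prop :=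
  ex_series (fun n => Re (a n)) /\ ex_series (fun n => Im (a n)).

Lemma ex_CSeries_le_geom (a : nat -> C) (M r : R) :
  (0 <= r < 1)%R -> (forall n, Cmod (a n) <= M * r ^ n)%R -> ex_CSeries a.
Proof.
  intros Hr Ha.
  assert (Hgeom : ex_series (fun n => M * r ^ n)%R).
  { apply (ex_series_scal_l (V := R_NormedModule)), ex_series_geom.
    rewrite Rabs_pos_eq; lra. }
  split; refine (ex_series_le _ _ _ Hgeom); intros n;
    change norm with Rabs; simpl; eapply Rle_trans; try apply Ha.
  - apply re_le_Cmod.
  - apply Rabs_Im_le_Cmod.
Qed.

Lemma ex_CSeries_scal_l (c : C) (a : nat -> C) :
  ex_CSeries a -> ex_CSeries (fun n => c * a n).
Proof.
  intros [Hre Him]; destruct c as [x y]; split; simpl.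
  - apply @ex_series_minus; apply @ex_series_scal_l; assumption.
  - apply @ex_series_plus; apply @ex_series_scal_l; assumption.
Qed.

Lemma CSeries_ext (a b : nat -> C) : (forall n, a n = b n) -> CSeries a = CSeries b.
Proof.
  intros Hab; unfold CSeries; f_equal; apply Series_ext; intros n; rewrite Hab; reflexivity.
Qed.

Lemma CSeries_plus (a b : nat -> C) : ex_CSeries a -> ex_CSeries b ->
  CSeries (fun n => a n + b n) = CSeries a + CSeries b.
Proof. intros [] []; unfold CSeries; simpl; rewrite !Series_plus; auto. Qed.

Lemma CSeries_scal_l (c : C) (a : nat -> C) : ex_CSeries a ->
  CSeries (fun n => c * a n) = c * CSeries a.
Proof.
  intros [Hre Him]; destruct c as [x y]; unfold CSeries; simpl.
  rewrite Series_minus, Series_plus, !Series_scal_l; try apply @ex_series_scal_l; auto.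
Qed.

Lemma CSeries_incr_1 (a : nat -> C) : ex_CSeries a ->
  CSeries a = a O + CSeries (fun n => a (S n)).
Proof.
  intros [Hre Him]; unfold CSeries.
  rewrite (Series_incr_1 (fun n => Re (a n))), (Series_incr_1 (fun n => Im (a n))) by assumption.
  reflexivity.
Qed.

Lemma ex_CSeries_geom (q : C) : (Cmod q < 1)%R -> ex_CSeries (fun n => q ^ n).
Proof.
  intros Hq; apply (ex_CSeries_le_geom _ 1 (Cmod q)); [split; [apply Cmod_ge_0 | exact Hq] |].
  intros n; rewrite Cmod_pow; lra.
Qed.

Lemma CSeries_geom (q : C) : (Cmod q < 1)%R -> CSeries (fun n => q ^ n) = / (1 - q).
Proof.
  intros Hq; assert (Hex := ex_CSeries_geom q Hq).
  assert (Hq1 : 1 - q <> 0).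
  { intros E; assert (Eq : q = 1) by (rewrite <- (Cplus_0_l q), <- E; ring).
    rewrite Eq, Cmod_1 in Hq; lra. }
  set (G := CSeries (fun n => q ^ n)).
  assert (HG : G = 1 + q * G).
  { unfold G; rewrite CSeries_incr_1 at 1 by exact Hex.
    rewrite <- CSeries_scal_l by exact Hex; reflexivity. }
  transitivity ((G - q * G) / (1 - q)); [field; exact Hq1 |].
  replace (G - q * G) with (RtoC 1) by (rewrite HG at 1; ring).
  unfold Cdiv; ring.
Qed.

Lemma Re_scal_R (r : R) (c : C) : Re (RtoC r * c) = (r * Re c)%R.
Proof. destruct c; simpl; ring. Qed.

Lemma Im_scal_R (r : R) (c : C) : Im (RtoC r * c) = (r * Im c)%R.
Proof. destruct c; simpl; ring. Qed.

Lemma Re_CSeries (a : nat -> C) : Re (CSeries a) = Series (fun n => Re (a n)).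
Proof. reflexivity. Qed.

Lemma Im_CSeries (a : nat -> C) : Im (CSeries a) = Series (fun n => Im (a n)).
Proof. reflexivity. Qed.

Definition pow_series (w : C) (c : nat -> R) : C :=
  CSeries (fun k => w ^ (k + 1) * RtoC (c k)).

Lemma ex_pow_series (w : C) (c : nat -> R) (M : R) :
  (Cmod w < 1)%R -> (forall k, Rabs (c k) <= M)%R ->
  ex_CSeries (fun k => w ^ (k + 1) * RtoC (c k)).
Proof.
  intros Hw Hc.
  assert (Hw0 := Cmod_ge_0 w).
  apply (ex_CSeries_le_geom _ M (Cmod w)); [lra |].
  intros k; rewrite Cmod_mult, Cmod_R, Cmod_pow, pow_add, pow_1.
  assert (Hk := pow_le _ k Hw0).
  assert (Hcw : (Rabs (c k) * Cmod w <= M)%R)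
    by (specialize (Hc k); assert (H0 := Rabs_pos (c k)); nra).
  nra.
Qed.

Lemma pow_series_lin (w : C) (c c1 c2 : nat -> R) (a b M1 M2 : R) :
  (Cmod w < 1)%R -> (forall k, Rabs (c1 k) <= M1)%R -> (forall k, Rabs (c2 k) <= M2)%R ->
  (forall k, c k = a * c1 k + b * c2 k)%R ->
  pow_series w c = a * pow_series w c1 + b * pow_series w c2.
Proof.
  intros Hw H1 H2 Hc; unfold pow_series.
  rewrite <- !CSeries_scal_l, <- CSeries_plus;
    try apply ex_CSeries_scal_l; try (eapply ex_pow_series; eassumption).
  apply CSeries_ext; intros k; rewrite Hc, RtoC_plus, !RtoC_mult; ring.
Qed.

Lemma Li_pow_series (n : nat) (w : C) :
  Li n w = pow_series w (fun k => / INR (k + 1) ^ n)%R.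
Proof.
  apply CSeries_ext; intros k; apply Cdiv_RtoC.
  assert (H := INR_succ_pow_ge_1 n k); lra.
Qed.

Definition odd_harmonic (w : C) : C :=
  CSeries (fun k => w ^ k / RtoC (INR (2 * k + 1))).

Lemma ex_odd_harmonic (w : C) : (Cmod w < 1)%R ->
  ex_CSeries (fun k => w ^ k / RtoC (INR (2 * k + 1))).
Proof.
  intros Hw; apply (ex_CSeries_le_geom _ 1 (Cmod w)); [split; [apply Cmod_ge_0 | exact Hw] |].
  intros k; rewrite Cdiv_RtoC, Cmod_mult, Cmod_R, Cmod_pow by (apply not_0_INR; lia).
  assert (H : (Rabs (/ INR (2 * k + 1)) <= 1)%R) by (apply Rabs_inv_INR_le_1; lia).
  assert (Hk := pow_le _ k (Cmod_ge_0 w)); nra.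
Qed.

Lemma Carctanh_odd_harmonic (z : C) : (Cmod z < 1)%R ->
  Carctanh z = z * odd_harmonic (z ^ 2).
Proof.
  intros Hz; unfold Carctanh, odd_harmonic.
  rewrite <- CSeries_scal_l.
  - apply CSeries_ext; intros k; rewrite Cpow_add_r, Cpow_mult_r; unfold Cdiv; ring.
  - apply ex_odd_harmonic, Cmod_sqr_lt_1, Hz.
Qed.

Lemma Cmult_odd_harmonic (w : C) : (Cmod w < 1)%R ->
  w * odd_harmonic w = pow_series w (fun k => / INR (2 * k + 1))%R.
Proof.
  intros Hw; unfold odd_harmonic, pow_series.
  rewrite <- CSeries_scal_l by (apply ex_odd_harmonic; exact Hw).
  apply CSeries_ext; intros k.
  rewrite Cdiv_RtoC, Cpow_add_r by (apply not_0_INR; lia); ring.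
Qed.

Lemma odd_harmonic_incr_1 (w : C) : (Cmod w < 1)%R ->
  odd_harmonic w = 1 + pow_series w (fun k => / INR (2 * k + 3))%R.
Proof.
  intros Hw; unfold odd_harmonic, pow_series.
  rewrite CSeries_incr_1 by (apply ex_odd_harmonic; exact Hw); f_equal.
  - simpl; rewrite Cdiv_RtoC, Rinv_1 by lra; ring.
  - apply CSeries_ext; intros k.
    rewrite Cdiv_RtoC, Nat.add_1_r by (apply not_0_INR; lia).
    do 4 f_equal; lia.
Qed.

Section LogComponent.

Variable proj : C -> R.
Hypothesis proj_le_Cmod : forall c, (Rabs (proj c) <= Cmod c)%R.
Hypothesis proj_scal_R : forall (r : R) c, proj (RtoC r * c) = (r * proj c)%R.
Hypothesis proj_CSeries : forall a, proj (CSeries a) = Series (fun n => proj (a n)).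

(* [PSeries (log_coef w) t = proj (Li 1 (RtoC t * w))]. *)
Definition log_coef (w : C) : nat -> R :=
  PS_incr_1 (fun n => proj (w ^ S n) / INR (S n))%R.

Lemma log_coef_bound (w : C) (n : nat) : (Rabs (log_coef w n) <= Cmod w ^ n)%R.
Proof.
  destruct n as [| n].
  - change (log_coef w 0) with 0%R; rewrite Rabs_R0; simpl; lra.
  - change (log_coef w (S n)) with (proj (w ^ S n) / INR (S n))%R.
    assert (Hn : (1 <= INR (S n))%R) by (apply (le_INR 1); lia).
    unfold Rdiv; rewrite Rabs_mult.
    assert (Hinv := Rabs_inv_le_1 _ Hn).
    assert (Hp := proj_le_Cmod (w ^ S n)); rewrite Cmod_pow in Hp.
    assert (H0 := Rabs_pos (proj (w ^ S n))); assert (H1 := Rabs_pos (/ INR (S n))).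
    nra.
Qed.

Lemma CV_radius_log_coef (w : C) : (Cmod w < 1)%R -> Rbar_lt 1 (CV_radius (log_coef w)).
Proof.
  intros Hw; assert (Hw0 := Cmod_ge_0 w).
  set (r := (2 / (1 + Cmod w))%R).
  assert (Hr1 : (1 < r)%R) by (unfold r; apply Rlt_div_r; lra).
  assert (Hwr : (Cmod w * r <= 1)%R).
  { unfold r; apply (Rmult_le_reg_r (1 + Cmod w)); [lra |]; field_simplify; lra. }
  apply (Rbar_lt_le_trans _ r); [exact Hr1 |].
  apply (proj1 (CV_radius_bounded _)).
  exists 1%R; intros n.
  rewrite Rabs_mult, <- RPow_abs, (Rabs_pos_eq r) by lra.
  apply (Rle_trans _ (Cmod w ^ n * r ^ n)).
  - apply Rmult_le_compat_r; [apply pow_le; lra | apply log_coef_bound].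
  - rewrite <- Rpow_mult_distr, <- (pow1 n); apply pow_incr; nra.
Qed.

Lemma is_derive_PSeries_log_coef (w : C) (t : R) :
  (Cmod w < 1)%R -> (Rabs t <= 1)%R ->
  is_derive (PSeries (log_coef w)) t (proj (w / (1 - RtoC t * w))).
Proof.
  intros Hw Ht.
  assert (Htw : (Cmod (RtoC t * w) < 1)%R)
    by (rewrite Cmod_mult, Cmod_R; assert (H := Cmod_ge_0 w); nra).
  replace (w / (1 - RtoC t * w)) with (CSeries (fun n => w * (RtoC t * w) ^ n)).
  - rewrite proj_CSeries.
    replace (Series _) with (PSeries (PS_derive (log_coef w)) t).
    + apply is_derive_PSeries, (Rbar_le_lt_trans _ 1); [exact Ht | apply CV_radius_log_coef, Hw].
    + apply Series_ext; intros n.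
      change (PS_derive (log_coef w) n) with (INR (S n) * (proj (w ^ S n) / INR (S n)))%R.
      replace (w * (RtoC t * w) ^ n) with (RtoC (t ^ n) * w ^ S n)
        by (rewrite Cpow_mult_l, <- RtoC_pow; simpl; ring).
      rewrite proj_scal_R; field; apply not_0_INR; lia.
  - rewrite CSeries_scal_l, CSeries_geom by first [exact Htw | exact (ex_CSeries_geom _ Htw)].
    reflexivity.
Qed.

Lemma PSeries_log_coef_1 (w : C) : PSeries (log_coef w) 1 = proj (Li 1 w).
Proof.
  rewrite Li_pow_series; unfold log_coef, pow_series.
  rewrite PSeries_incr_1, Rmult_1_l, proj_CSeries.
  apply Series_ext; intros n.
  rewrite pow1, Rmult_1_r, Cmult_comm, proj_scal_R, pow_1, Nat.add_1_r.
  unfold Rdiv; ring.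
Qed.

End LogComponent.

Lemma one_minus_Re_pos (w : C) (t : R) :
  (Cmod w < 1)%R -> (0 <= t <= 1)%R -> (0 < 1 - t * Re w)%R.
Proof.
  intros Hw Ht; assert (H := re_le_Cmod w); assert (H1 := Rle_abs (Re w)).
  assert (H2 : (t * Re w <= Rabs (Re w))%R) by (assert (H3 := Rabs_pos (Re w)); nra).
  lra.
Qed.

Lemma is_derive_plus_opp (f g : R -> R) (t d : R) :
  is_derive f t d -> is_derive g t (- d)%R -> is_derive (fun x => f x + g x)%R t zero.
Proof.
  intros Hf Hg; assert (H := is_derive_plus _ _ _ _ _ Hf Hg).
  unfold plus in H; simpl in H; rewrite Rplus_opp_r in H; exact H.
Qed.

Lemma Re_Li_1 (w : C) : (Cmod w < 1)%R -> Re (Li 1 w) = (- ln (Cmod (1 - w)))%R.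
Proof.
  intros Hw.
  set (D t := ((1 - t * Re w) ^ 2 + (t * Im w) ^ 2)%R).
  assert (HD : forall t, (0 <= t <= 1)%R -> (0 < D t)%R).
  { intros t Ht; assert (H := one_minus_Re_pos w t Hw Ht); unfold D; nra. }
  assert (Hconst : (PSeries (log_coef Re w) 0 + / 2 * ln (D 0)
                    = PSeries (log_coef Re w) 1 + / 2 * ln (D 1))%R).
  { apply (eq_is_derive (fun t => PSeries (log_coef Re w) t + / 2 * ln (D t))%R); [| lra].
    intros t Ht; apply is_derive_plus_opp with (d := Re (w / (1 - RtoC t * w))).
    - apply is_derive_PSeries_log_coef; [exact re_le_Cmod | exact Re_scal_R |
        exact Re_CSeries | exact Hw | apply Rabs_le; lra].
    - assert (H := HD t Ht); unfold D in *; auto_derive; [exact H |].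
      destruct w as [u v]; simpl in *; field.
      lra. }
  rewrite PSeries_0, (PSeries_log_coef_1 Re) in Hconst by (exact Re_scal_R || exact Re_CSeries).
  change (log_coef Re w 0) with 0%R in Hconst.
  replace (D 0) with 1%R in Hconst by (unfold D; ring).
  assert (HD1 : D 1 = (Cmod (1 - w) ^ 2)%R)
    by (rewrite Cmod2_alt; unfold D, Cminus, Cplus, Copp, Re, Im; simpl; ring).
  assert (Hpos : (0 < Cmod (1 - w))%R).
  { assert (H := HD 1%R ltac:(lra)); rewrite HD1 in H.
    destruct (Cmod_ge_0 (1 - w)) as [H0 | H0]; [exact H0 | rewrite <- H0 in H; lra]. }
  rewrite HD1, ln_pow, ln_1 in Hconst by exact Hpos; cbn [INR] in Hconst; lra.
Qed.

Lemma Carg_Re_pos (c : C) : (0 < Re c)%R -> Carg c = atan (Im c / Re c).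
Proof.
  intros Hx; destruct c as [x y]; unfold Carg, Cmod, Re, Im in *; cbn [fst snd] in *.
  assert (Hs : (0 < sqrt (x ^ 2 + y ^ 2))%R) by (apply sqrt_lt_R0; nra).
  assert (Hss : (sqrt (x ^ 2 + y ^ 2) * sqrt (x ^ 2 + y ^ 2) = x ^ 2 + y ^ 2)%R)
    by (apply sqrt_sqrt; nra).
  set (s := sqrt (x ^ 2 + y ^ 2)) in *.
  rewrite acos_atan by (apply Rdiv_lt_0_compat; assumption).
  assert (E : (sqrt (1 - (x / s)²) / (x / s) = Rabs y / x)%R).
  { replace (1 - (x / s)²)%R with (Rsqr (Rabs y / s))
      by (rewrite Rsqr_div', <- Rsqr_abs; unfold Rsqr; field_simplify_eq; nra).
    rewrite sqrt_Rsqr by (apply Rdiv_le_0_compat; [apply Rabs_pos | lra]).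
    field; lra. }
  rewrite E; destruct (Rle_dec 0 y).
  - rewrite Rabs_pos_eq by assumption; reflexivity.
  - rewrite Rabs_left, <- atan_opp by lra; f_equal; field; lra.
Qed.

Lemma Im_Li_1 (w : C) : (Cmod w < 1)%R -> Im (Li 1 w) = (- Carg (1 - w))%R.
Proof.
  intros Hw.
  set (A t := atan (t * Im w / (1 - t * Re w))).
  assert (Hconst : (PSeries (log_coef Im w) 0 - A 0 = PSeries (log_coef Im w) 1 - A 1)%R).
  { apply (eq_is_derive (fun t => PSeries (log_coef Im w) t - A t)%R); [| lra].
    intros t Ht; apply is_derive_plus_opp with (d := Im (w / (1 - RtoC t * w))).
    - apply is_derive_PSeries_log_coef; [exact Rabs_Im_le_Cmod | exact Im_scal_R |
        exact Im_CSeries | exact Hw | apply Rabs_le; lra].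
    - assert (H := one_minus_Re_pos w t Hw Ht); unfold A; auto_derive; [lra |].
      destruct w as [u v]; simpl in *; field.
      split; [nra | lra]. }
  rewrite PSeries_0, (PSeries_log_coef_1 Im) in Hconst by (exact Im_scal_R || exact Im_CSeries).
  change (log_coef Im w 0) with 0%R in Hconst.
  assert (HA0 : A 0 = 0%R) by (unfold A; rewrite Rmult_0_l, Rdiv_0_l; apply atan_0).
  assert (H1 := one_minus_Re_pos w 1 Hw ltac:(lra)).
  rewrite Carg_Re_pos.
  - replace (Im (1 - w) / Re (1 - w))%R with (- (1 * Im w / (1 - 1 * Re w)))%R.
    + rewrite atan_opp; fold (A 1); lra.
    + destruct w as [u v]; simpl in *; field; lra.
  - destruct w as [u v]; simpl in *; lra.
Qed.

Lemma Cln_1_minus (w : C) : (Cmod w < 1)%R -> Cln (1 - w) = - Li 1 w.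
Proof.
  intros Hw; unfold Cln; apply injective_projections.
  - change (ln (Cmod (1 - w)) = - Re (Li 1 w))%R; rewrite Re_Li_1 by exact Hw; ring.
  - change (Carg (1 - w) = - Im (Li 1 w))%R; rewrite Im_Li_1 by exact Hw; ring.
Qed.

Definition Fden (p k : nat) : R :=
  INR (2 * k + 1) * INR (2 * (k + 1)) ^ p * INR (2 * k + 3).

Definition Fser (w : C) (p : nat) : C := pow_series w (fun k => / Fden p k)%R.

Lemma Fden_ge_1 (p k : nat) : (1 <= Fden p k)%R.
Proof.
  unfold Fden.
  assert (H1 : (1 <= INR (2 * k + 1))%R) by (apply (le_INR 1); lia).
  assert (H2 : (1 <= INR (2 * (k + 1)) ^ p)%R) by (apply pow_R1_Rle, (le_INR 1); lia).
  assert (H3 : (1 <= INR (2 * k + 3))%R) by (apply (le_INR 1); lia).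
  assert (H12 : (1 <= INR (2 * k + 1) * INR (2 * (k + 1)) ^ p)%R) by nra.
  nra.
Qed.

Lemma Rabs_inv_Fden_le_1 (p k : nat) : (Rabs (/ Fden p k) <= 1)%R.
Proof. apply Rabs_inv_le_1, Fden_ge_1. Qed.

Lemma Fzp_Fser (z : C) (p : nat) : Fzp z p = Fser (z ^ 2) p.
Proof.
  apply CSeries_ext; intros k.
  rewrite Cpow_mult_r, Cdiv_RtoC; [reflexivity |].
  assert (H := Fden_ge_1 p k); unfold Fden in H; lra.
Qed.

Ltac expand_Fden :=
  unfold Fden; rewrite ?mult_INR, ?plus_INR, ?mult_INR; cbn [INR];
  replace (1 + 1)%R with 2%R by ring.

Lemma Fden_inv_add2 (p k : nat) :
  (/ Fden p k = 1 * / Fden (p + 2) k + (/ 2) ^ (p + 2) * / INR (k + 1) ^ (p + 2))%R.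
Proof.
  expand_Fden; rewrite !pow_add, pow_inv, !Rpow_mult_distr.
  assert (Hk := pos_INR k).
  assert (H2 := pow_lt 2 p ltac:(lra)); assert (Hk1 := pow_lt (INR k + 1) p ltac:(lra)).
  field; repeat split; lra.
Qed.

Lemma Fden_inv_0 (k : nat) :
  (/ Fden 0 k = / 2 * / INR (2 * k + 1) + - / 2 * / INR (2 * k + 3))%R.
Proof. expand_Fden; assert (Hk := pos_INR k); field; repeat split; lra. Qed.

Lemma Fden_inv_1 (k : nat) :
  (/ Fden 1 k = / 2 * (/ INR (2 * k + 1) + / INR (2 * k + 3)) + - / 2 * / INR (k + 1) ^ 1)%R.
Proof. expand_Fden; assert (Hk := pos_INR k); field; repeat split; lra. Qed.

Lemma Fser_add2 (w : C) (p : nat) : (Cmod w < 1)%R ->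
  Fser w (p + 2) = Fser w p - RtoC ((/ 2) ^ (p + 2)) * Li (p + 2) w.
Proof.
  intros Hw; unfold Fser; rewrite Li_pow_series.
  rewrite (pow_series_lin w _ _ _ 1 ((/ 2) ^ (p + 2)) 1 1 Hw
             (Rabs_inv_Fden_le_1 (p + 2)) (Rabs_inv_INR_succ_pow_le_1 (p + 2))
             (Fden_inv_add2 p)).
  ring.
Qed.

Lemma Fser_add_twice (w : C) (p m : nat) : (Cmod w < 1)%R ->
  Fser w (p + 2 * m) =
  Fser w p - Csum1 m (fun j => RtoC ((/ 2) ^ (p + 2 * j)) * Li (p + 2 * j) w).
Proof.
  intros Hw; induction m as [| m IH]; cbn [Csum1].
  - rewrite Nat.add_0_r; ring.
  - replace (p + 2 * S m)%nat with (p + 2 * m + 2)%nat by lia.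
    rewrite Fser_add2, IH by exact Hw; ring.
Qed.

Lemma Fser_0 (w : C) : (Cmod w < 1)%R ->
  Fser w 0 = / 2 * ((w - 1) * odd_harmonic w + 1).
Proof.
  intros Hw.
  replace ((w - 1) * odd_harmonic w + 1) with (w * odd_harmonic w - (odd_harmonic w - 1)) by ring.
  rewrite Cmult_odd_harmonic, odd_harmonic_incr_1 by exact Hw.
  unfold Fser.
  rewrite (pow_series_lin w _ _ _ (/ 2) (- / 2) 1 1 Hw
             (fun k => Rabs_inv_INR_le_1 (2 * k + 1) ltac:(lia))
             (fun k => Rabs_inv_INR_le_1 (2 * k + 3) ltac:(lia)) Fden_inv_0).
  rewrite RtoC_opp, RtoC_inv by lra; ring.
Qed.

Lemma Fser_1 (w : C) : (Cmod w < 1)%R ->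
  Fser w 1 = / 2 * ((w + 1) * odd_harmonic w - 1 - Li 1 w).
Proof.
  intros Hw.
  set (c1 k := (/ INR (2 * k + 1))%R); set (c3 k := (/ INR (2 * k + 3))%R).
  assert (H1 : forall k, (Rabs (c1 k) <= 1)%R) by (intros k; apply Rabs_inv_INR_le_1; lia).
  assert (H3 : forall k, (Rabs (c3 k) <= 1)%R) by (intros k; apply Rabs_inv_INR_le_1; lia).
  assert (H13 : forall k, (Rabs (c1 k + c3 k) <= 1 + 1)%R)
    by (intros k; eapply Rle_trans; [apply Rabs_triang | apply Rplus_le_compat; auto]).
  assert (Hsum : pow_series w (fun k => c1 k + c3 k)%R = pow_series w c1 + pow_series w c3).
  { rewrite (pow_series_lin w _ c1 c3 1 1 1 1 Hw H1 H3) by (intros k; ring); ring. }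
  replace ((w + 1) * odd_harmonic w - 1) with (w * odd_harmonic w + (odd_harmonic w - 1)) by ring.
  rewrite Cmult_odd_harmonic, odd_harmonic_incr_1, Li_pow_series by exact Hw.
  fold c1 c3; replace (1 + pow_series w c3 - 1) with (pow_series w c3) by ring.
  rewrite <- Hsum; unfold Fser.
  rewrite (pow_series_lin w _ _ _ (/ 2) (- / 2) (1 + 1) 1 Hw H13
             (Rabs_inv_INR_succ_pow_le_1 1) Fden_inv_1).
  rewrite RtoC_opp, RtoC_inv by lra; ring.
Qed.

Lemma Csum1_mult_l (c : C) (m : nat) (f : nat -> C) :
  c * Csum1 m f = Csum1 m (fun j => c * f j).
Proof. induction m as [| m IH]; cbn [Csum1]; [ring | rewrite <- IH; ring]. Qed.

Lemma Csum1_ext (m : nat) (f g : nat -> C) :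
  (forall j, (1 <= j)%nat -> f j = g j) -> Csum1 m f = Csum1 m g.
Proof.
  intros Hfg; induction m as [| m IH]; cbn [Csum1]; [reflexivity |].
  rewrite IH, Hfg by lia; reflexivity.
Qed.

Theorem theorem1 (p : nat) (z : C) (hz0 : (0 < Cmod z)%R) (hz1 : (Cmod z < 1)%R) :
  (Nat.Even p ->
     Fzp z p =
       /2 * ((z - / z) * Carctanh z + 1
             - Csum1 (Nat.div2 p) (fun j => RtoC ((/ 2) ^ (2 * j - 1)) * Li (2 * j) (z ^ 2))))
  /\
  (Nat.Odd p ->
     Fzp z p =
       /2 * ((z + / z) * Carctanh z - 1 + Cln (1 - z ^ 2)
             - Csum1 (Nat.div2 p) (fun j => RtoC ((/ 2) ^ (2 * j)) * Li (2 * j + 1) (z ^ 2)))).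
Proof.
  assert (Hz : z <> 0) by (apply Cmod_gt_0; exact hz0).
  assert (Hw := Cmod_sqr_lt_1 z hz1).
  rewrite Carctanh_odd_harmonic, Fzp_Fser by exact hz1.
  split.
  - intros [m ->]; rewrite Nat.div2_double.
    rewrite <- (Nat.add_0_l (2 * m)), Fser_add_twice, Fser_0 by exact Hw.
    rewrite (Csum1_ext m (fun j => RtoC ((/ 2) ^ (0 + 2 * j)) * Li (0 + 2 * j) (z ^ 2))
                         (fun j => / 2 * (RtoC ((/ 2) ^ (2 * j - 1)) * Li (2 * j) (z ^ 2)))).
    + rewrite <- Csum1_mult_l; field; exact Hz.
    + intros j Hj; rewrite <- RtoC_inv, Cmult_assoc, <- RtoC_mult by lra.
      replace (0 + 2 * j)%nat with (S (2 * j - 1)) at 1 by lia.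
      replace (0 + 2 * j)%nat with (2 * j)%nat by lia; reflexivity.
  - intros [m ->]; rewrite Nat.add_1_r, Nat.div2_succ_double, <- (Nat.add_1_l (2 * m)).
    rewrite Fser_add_twice, Fser_1, Cln_1_minus by exact Hw.
    rewrite (Csum1_ext m (fun j => RtoC ((/ 2) ^ (1 + 2 * j)) * Li (1 + 2 * j) (z ^ 2))
                         (fun j => / 2 * (RtoC ((/ 2) ^ (2 * j)) * Li (2 * j + 1) (z ^ 2)))).
    + rewrite <- Csum1_mult_l; field; exact Hz.
    + intros j _; rewrite <- RtoC_inv, Cmult_assoc, <- RtoC_mult by lra.
      replace (1 + 2 * j)%nat with (S (2 * j)) at 1 by lia.
      replace (1 + 2 * j)%nat with (2 * j + 1)%nat by lia; reflexivity.
Qed.
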